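(* Let $G_{\|v_0}$ be a well-initialized prefix-independent game with steady negotiation, let $\epsilon\ge0$, and let $\lambda$ be an $\epsilon$-fixed point of the negotiation function. Then for every $\lambda$-consistent play $\xi$ starting in $v_0$, there exists an $\epsilon$-SPE $\bar\sigma$ in $G_{\|v_0}$ such that $\langle\bar\sigma\rangle_{v_0}=\xi$.
   Context: A game is a tuple $G=(\Pi,V,(V_i)_{i\in\Pi},E,\mu)$ where $\Pi$ is a finite set of players, $(V,E)$ is a finite directed graph in which every vertex has at least one outgoing edge, $(V_i)_{i\in\Pi}$ is a partition of $V$, and $\mu:V^\omega\to\mathbb{R}^\Pi$ is the outcome function. Plays, histories, strategies, profiles, compatibility and $\langle\bar\sigma\rangle_v$ are as usual; $G_{\|v_0}$ is $G$ initialized at $v_0$ and is well-initialized if every vertex is reachable from $v_0$; $-i$ denotes $\Pi\setminus\{i\}$; $\bar\sigma_{\|hv}$ is the profile in $G_{\|v}$ with $\sigma_{j\|hv}(h')=\sigma_j(hh')$. $G$ is prefix-independent if $\mu(h\rho)=\mu(\rho)$ for every history $h$ and play $\rho$. A profile $\bar\sigma$ in $G_{\|v_0}$ is an $\epsilon$-SPE if for every history $hv$ of $G_{\|v_0}$, every player $i$ and strategy $\sigma'_i$, $\mu_i(h\langle\bar\sigma_{-i\|hv},\sigma'_{i\|hv}\rangle_v)\le\mu_i(h\langle\bar\sigma_{\|hv}\rangle_v)+\epsilon$. A requirement is a map $\lambda:V\to\mathbb{R}\cup\{\pm\infty\}$. A play $\rho$ is $\lambda$-consistent if for every $i\in\Pi$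 and $n$ with $\rho_n\in V_i$, $\mu_i(\rho_n\rho_{n+1}\cdots)\ge\lambda(\rho_n)$. $\lambda\mathrm{Rat}_i(v)$ is the set of profiles $\bar\sigma_{-i}$ in $G_{\|v}$ for which there exists $\sigma_i$ such that for every history $hw$ from $v$ compatible with $\bar\sigma_{-i}$, $\langle\bar\sigma_{\|hw}\rangle_w$ is $\lambda$-consistent. For $i\in\Pi$, $v\in V_i$: $\mathrm{nego}(\lambda)(v)=\inf_{\bar\sigma_{-i}\in\lambda\mathrm{Rat}_i(v)}\sup_{\sigma_i}\mu_i(\langle\bar\sigma_{-i},\sigma_i\rangle_v)$, $\inf\emptyset=+\infty$. $\lambda$ is an $\epsilon$-fixed point of $\mathrm{nego}$ if $\lambda(v)-\epsilon\le\mathrm{nego}(\lambda)(v)\le\lambda(v)+\epsilon$ for all $v$ (with $\pm\infty\pm\epsilon=\pm\infty$). $G$ is with steady negotiation if for every player $i$, vertex $v$ and requirement $\lambda$, the set $\{\sup_{\sigma_i}\mu_i(\langle\bar\sigma_{-i},\sigma_i\rangle_v)\mid\bar\sigma_{-i}\in\lambda\mathrm{Rat}_i(v)\}$ is empty or has a minimum. *)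

From HB Require Import structures.
From mathcomp Require Import all_boot all_order all_algebra.
From mathcomp Require Import classical_sets boolp reals constructive_ereal ereal.
Set Implicit Arguments. Unset Strict Implicit. Unset Printing Implicit Defensive.
Import Order.TTheory GRing.Theory Num.Theory.
Local Open Scope classical_set_scope.
Local Open Scope ring_scope.

Section Game.
(* A game: players Pi (finite), vertices V (finite), owner v = the player i
   with v in V_i (the partition), edge relation E, outcome function mu. *)
Variables (R : realType) (Pi V : finType) (owner : V -> Pi) (E : rel V)
  (mu : (nat -> V) -> Pi -> R).

Definition strategy := seq V -> V.
Definition profile := Pi -> strategy.

Definition valid_strat (i : Pi) (s : strategy) : Prop :=
  forall (h : seq V) (v : V), owner v = i -> E v (s (rcons h v)).

Definition valid_profile (sg : profile) : Prop :=
  forall i, valid_strat i (sg i).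

Definition is_play (rho : nat -> V) : Prop := forall n, E (rho n) (rho n.+1).

Definition is_hist (v0 : V) (s : seq V) : Prop :=
  exists t, s = v0 :: t /\ path E v0 t.

Fixpoint out_prefix (sg : profile) (v : V) (n : nat) : seq V :=
  match n with
  | 0 => [:: v]
  | n.+1 => let p := out_prefix sg v n in
            rcons p (sg (owner (last v p)) p)
  end.

Definition outcome (sg : profile) (v : V) : nat -> V :=
  fun n => nth v (out_prefix sg v n) n.

Definition cat_play (h : seq V) (rho : nat -> V) : nat -> V :=
  fun n => if (n < size h)%N then nth (rho 0%N) h n else rho (n - size h)%N.

Definition suffix (rho : nat -> V) (n : nat) : nat -> V :=
  fun k => rho (n + k)%N.

Definition shift (sg : profile) (h : seq V) : profile :=
  fun j h' => sg j (h ++ h').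

Definition upd (sg : profile) (i : Pi) (t : strategy) : profile :=
  fun j => if j == i then t else sg j.

Definition prefix_independent : Prop :=
  forall (h : seq V) (rho : nat -> V), mu (cat_play h rho) = mu rho.

Definition well_initialized (v0 : V) : Prop :=
  forall v, exists h, is_hist v0 (rcons h v).

Definition eps_SPE (eps : R) (v0 : V) (sg : profile) : Prop :=
  forall (h : seq V) (v : V), is_hist v0 (rcons h v) ->
  forall (i : Pi) (s' : strategy), valid_strat i s' ->
    mu (cat_play h (outcome (upd (shift sg h) i (fun h' => s' (h ++ h'))) v)) i
    <= mu (cat_play h (outcome (shift sg h) v)) i + eps.

Definition requirement := V -> \bar R.

Definition lam_consistent (lam : requirement) (rho : nat -> V) : Prop :=
  forall n, (lam (rho n) <= (mu (suffix rho n) (owner (rho n)))%:E)%E.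

Definition compat_minus (i : Pi) (sg : profile) (d : V) (s : seq V) : Prop :=
  forall n, (n.+1 < size s)%N -> owner (nth d s n) != i ->
    nth d s n.+1 = sg (owner (nth d s n)) (take n.+1 s).

(* lambda Rat_i(v): profiles sg_{-i} (the i-th component of sg is ignored) *)
Definition lamRat (lam : requirement) (i : Pi) (v : V) : set profile :=
  [set sg | (forall j, j != i -> valid_strat j (sg j)) /\
     exists si, valid_strat i si /\
       forall (h : seq V) (w : V), is_hist v (rcons h w) ->
         compat_minus i sg v (rcons h w) ->
         lam_consistent lam (outcome (shift (upd sg i si) h) w)].

Definition best_resp_val (i : Pi) (v : V) (sg : profile) : \bar R :=
  ereal_sup [set (mu (outcome (upd sg i t) v) i)%:E | t in [set t | valid_strat i t]].

Definition nego (lam : requirement) (v : V) : \bar R :=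
  ereal_inf [set best_resp_val (owner v) v sg | sg in lamRat lam (owner v) v].

Definition eps_fixed_point (eps : R) (lam : requirement) : Prop :=
  forall v, (lam v - eps%:E <= nego lam v)%E /\ (nego lam v <= lam v + eps%:E)%E.

Definition steady_negotiation : Prop :=
  forall (i : Pi) (v : V) (lam : requirement),
    let S := [set best_resp_val i v sg | sg in lamRat lam i v] in
    S = set0 \/ exists2 x, S x & forall y, S y -> (x <= y)%E.

End Game.

From Pilot Require Import Defs.
From HB Require Import structures.
From mathcomp Require Import all_boot all_order all_algebra.
From mathcomp Require Import classical_sets boolp reals constructive_ereal ereal.
Import Order.TTheory GRing.Theory Num.Theory.
Set Implicit Arguments. Unset Strict Implicit. Unset Printing Implicit Defensive.

(* The equilibrium is a profile with memory.  It follows xi until somebody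
   deviates; after a deviation at a vertex x it punishes the owner of x by a
   profile tau_x realising nego(lambda)(x), which exists by steady negotiation.
   A new deviation of the player already punished from u only restarts the
   punishment (from the new vertex) when this lowers the negotiation value.

   The construction then shows that every history from v0
   is coherent with the memory of the profile, whence every outcome of the
   profile is lambda-consistent.  Against a deviation of player i: at the first
   departure from the prescription, at x, we get lambda(x) <= mu_i(outcome);
   afterwards i is punished from vertices of value at most nego(x), which
   stabilise, so the deviating play eventually is a play against the punishers
   and pays i at most nego(x) <= lambda(x) + eps. *)

Definition pre (T : Type) (rho : nat -> T) (n : nat) : seq T := mkseq rho n.+1.

Section Prefixes.
Variable T : Type.
Implicit Types (rho : nat -> T) (x : T).

Lemma pre_size rho n : size (pre rho n) = n.+1.
Proof. by rewrite /pre size_mkseq. Qed.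

Lemma pre_nth x rho n k : k <= n -> nth x (pre rho n) k = rho k.
Proof. by move=> hk; rewrite /pre nth_mkseq. Qed.

Lemma pre_last x rho n : last x (pre rho n) = rho n.
Proof. by rewrite /pre mkseqS last_rcons. Qed.

Lemma preS rho n : pre rho n.+1 = rcons (pre rho n) (rho n.+1).
Proof. by rewrite /pre mkseqS. Qed.

Lemma take_pre rho k m : k <= m -> take k.+1 (pre rho m) = pre rho k.
Proof.
move=> hk; rewrite -(subnKC hk) /pre -addSn /mkseq iotaD map_cat take_size_cat //.
by rewrite size_map size_iota.
Qed.

Lemma drop_pre rho p m : p <= m ->
  drop p (pre rho m) = pre (fun k => rho (p + k)) (m - p).
Proof.
move=> hp; apply: (eq_from_nth (x0 := rho 0)); first by rewrite size_drop !pre_size subSn.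
move=> k; rewrite size_drop pre_size (subSn hp) ltnS => hk.
by rewrite nth_drop !pre_nth // -(subnKC hp) leq_add2l.
Qed.

Lemma last_nonnil x y (s : seq T) : s <> [::] -> last x s = last y s.
Proof. by case: s. Qed.

Lemma last_drop x p (s : seq T) : drop p s <> [::] -> last x (drop p s) = last x s.
Proof. by move=> hd; rewrite -{2}(cat_take_drop p s) last_cat; case: (drop p s) hd. Qed.

Lemma drop_nonnil p (s : seq T) : drop p s <> [::] -> p < size s.
Proof. by move=> hd; rewrite ltnNge; apply/negP => /drop_oversize. Qed.

Lemma last_cat_pre x h rho n : last x (h ++ pre rho n) = rho n.
Proof. by rewrite last_cat (last_nonnil _ (rho 0)) ?pre_last // /pre mkseqS; case: mkseq. Qed.

End Prefixes.

(* Eventual stabilisation: a sequence whose every change strictly decreases a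
   natural-number measure is eventually constant.  This is what makes the
   punishment phase of the constructed profile settle down. *)
Section Stabilisation.
Variables (T : eqType) (f : nat -> T) (m : T -> nat) (n0 : nat).
Hypothesis decr : forall n, n0 <= n -> f n.+1 != f n -> m (f n.+1) < m (f n).

Lemma constant_or_decrease n : n0 <= n ->
  (forall j, f (n + j) = f n) \/ exists2 n', n0 <= n' & m (f n') < m (f n).
Proof.
move=> hn; case: (pselect (exists j, f (n + j) != f n)) => [exj|noj]; last first.
  by left=> j; apply/eqP/negPn/negP => hj; apply: noj; exists j.
right; case: (ex_minnP exj) => -[|j]; first by rewrite addn0 eqxx.
move=> hj minj; have same : f (n + j) = f n.
  by apply/eqP/negPn/negP => /minj; rewrite ltnn.
exists (n + j.+1); first exact: leq_trans hn (leq_addr _ _).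
by rewrite -same addnS decr ?(leq_trans hn (leq_addr _ _)) // -addnS same.
Qed.

Lemma eventually_constant : exists2 N, n0 <= N & forall j, f (N + j) = f N.
Proof.
suff: forall M n, n0 <= n -> m (f n) <= M -> exists2 N, n0 <= N & forall j, f (N + j) = f N.
  by apply; last exact: leqnn.
elim=> [|M IH] n hn hm; (case: (constant_or_decrease hn) => [cst|[n' hn' hlt]];
  first by exists n).
- by move: (leq_trans hlt hm).
- by apply: (IH n' hn'); rewrite -ltnS (leq_trans hlt hm).
Qed.

End Stabilisation.

Section Outcomes.
Variables (Pi V : finType) (owner : V -> Pi).
Implicit Types (sg : profile Pi V) (v : V).

Lemma out_prefix_pre sg v n : out_prefix owner sg v n = pre (outcome owner sg v) n.
Proof.
elim: n => [|n IH] //=; rewrite preS -IH; congr rcons.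
by rewrite /outcome /= nth_rcons IH pre_size ltnn eqxx.
Qed.

Lemma outcome_step sg v n :
  outcome owner sg v n.+1 = sg (owner (outcome owner sg v n)) (pre (outcome owner sg v) n).
Proof.
rewrite {1}/outcome /= out_prefix_pre nth_rcons pre_size ltnn eqxx.
by rewrite pre_last.
Qed.

Lemma outcome_char sg v (rho : nat -> V) :
  rho 0 = v -> (forall n, rho n.+1 = sg (owner (rho n)) (pre rho n)) ->
  outcome owner sg v = rho.
Proof.
move=> h0 hS; have pre_eq n : out_prefix owner sg v n = pre rho n.
  elim: n => [|n IH] /=; first by rewrite /pre /mkseq /= h0.
  by rewrite IH preS pre_last hS.
by apply: funext => n; rewrite /outcome pre_eq pre_nth.
Qed.

End Outcomes.

Section Histories.
Variables (Pi V : finType) (owner : V -> Pi) (E : rel V).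
Implicit Types (u x w : V) (s : seq V) (psi : nat -> V).

Lemma hist_nonnil u s : is_hist E u s -> s <> [::].
Proof. by move=> [t [-> _]]. Qed.

Lemma hist_rcons x u s w : is_hist E u s -> E (last x s) w -> is_hist E u (rcons s w).
Proof. by case=> t [-> hp] he; exists (rcons t w); rewrite rcons_path hp. Qed.

Lemma hist_pre_head u psi m : is_hist E u (pre psi m) -> psi 0 = u.
Proof. by case=> t [et _]; have := pre_nth u psi (leq0n m); rewrite et. Qed.

Lemma hist_pre_edge u psi m k : is_hist E u (pre psi m) -> k < m -> E (psi k) (psi k.+1).
Proof.
case=> t [et pt] hk; have szt : size t = m by have := congr1 size et; rewrite pre_size => -[].
have nth_t : nth u t k = psi k.+1 by rewrite -[nth u t k]/(nth u (u :: t) k.+1) -et pre_nth.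
have nth_ut : nth u (u :: t) k = psi k by rewrite -et pre_nth // ltnW.
by move/(pathP u): pt => /(_ k); rewrite szt nth_ut nth_t; apply.
Qed.

Lemma valid_strat_last i (t : strategy V) x s : s <> [::] ->
  valid_strat owner E i t -> owner (last x s) = i -> E (last x s) (t s).
Proof. by case: s => [//|y s] _ hv; rewrite (lastI y s) last_rcons; apply: hv. Qed.

Lemma compat_rcons k (sg : profile Pi V) d s w :
  compat_minus owner k sg d s -> s <> [::] ->
  (owner (last d s) != k -> w = sg (owner (last d s)) s) ->
  compat_minus owner k sg d (rcons s w).
Proof.
move=> hc hs hw n; rewrite size_rcons ltnS => hn.
have tk : take n.+1 (rcons s w) = take n.+1 s by rewrite -cats1 takel_cat.
case: (ltnP n.+1 (size s)) => h2.
  by rewrite !nth_rcons (ltnW h2) h2 tk => ho; apply: hc.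
have e : n.+1 = size s by apply/eqP; rewrite eqn_leq hn h2.
rewrite !nth_rcons -e ltnSn ltnn eqxx => ho.
have el : nth d s n = last d s by rewrite -nth_last -e.
by rewrite el in ho *; rewrite (hw ho) e -cats1 take_size_cat.
Qed.

Lemma compat_pre_step i (sg : profile Pi V) u psi m k :
  compat_minus owner i sg u (pre psi m) -> k < m -> owner (psi k) != i ->
  psi k.+1 = sg (owner (psi k)) (pre psi k).
Proof.
move=> hc hk ho; have := hc k; rewrite pre_size ltnS (pre_nth u psi (ltnW hk)).
by rewrite (pre_nth u psi hk) (take_pre _ (ltnW hk)); apply.
Qed.

Lemma pre_cat_play h (rho : nat -> V) n : pre (cat_play h rho) (size h + n) = h ++ pre rho n.
Proof.
apply: (eq_from_nth (x0 := rho 0)); first by rewrite size_cat !pre_size addnS.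
move=> k; rewrite pre_size ltnS => hk; rewrite pre_nth // /cat_play nth_cat.
by case: ifP => hk2; [exact: set_nth_default | rewrite pre_nth // leq_subLR].
Qed.

End Histories.

Section Payoffs.
Variables (R : realType) (Pi V : finType) (owner : V -> Pi) (E : rel V)
  (mu : (nat -> V) -> Pi -> R).

Lemma mu_suffix (Hpi : prefix_independent mu) (rho : nat -> V) n :
  mu (Defs.suffix rho n) = mu rho.
Proof.
rewrite -(Hpi (mkseq rho n)); congr mu; apply: funext => k.
rewrite /cat_play size_mkseq; case: ltnP => hk; first by rewrite nth_mkseq.
by rewrite /Defs.suffix subnKC.
Qed.

(* Any play from u in which every player other than i follows sg is the
   outcome of (sg_{-i}, t) for some strategy t of i, so its payoff for i is
   bounded by i's best-response value against sg_{-i}. *)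
Lemma play_le_best_resp (def : V -> V) (Hdef : forall v, E v (def v))
    i u (sg : profile Pi V) (psi : nat -> V) :
  psi 0 = u -> (forall k, E (psi k) (psi k.+1)) ->
  (forall k, owner (psi k) != i -> psi k.+1 = sg (owner (psi k)) (pre psi k)) ->
  ((mu psi i)%:E <= best_resp_val owner E mu i u sg)%E.
Proof.
move=> psi0 psiE psiC.
pose t : strategy V := fun s =>
  if s == pre psi (size s).-1 then psi (size s) else def (last u s).
have t_valid : valid_strat owner E i t.
  move=> s y _; rewrite /t size_rcons /=; case: eqP => [es|_]; last by rewrite last_rcons.
  by have := congr1 (last u) es; rewrite last_rcons pre_last => ->.
have -> : psi = outcome owner (upd sg i t) u.
  symmetry; apply: outcome_char => // k; rewrite /upd; case: eqP => ho.
    by rewrite /t pre_size /= eqxx.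
  by apply: psiC; apply/eqP.
by apply: ereal_sup_ubound; exists t.
Qed.

(* A punishment of the owner of u: a profile sg for the other players,
   together with a reply t of the owner, witnessing that sg lies in
   lambda-Rat(u) and realising the value nego(lambda)(u). *)
Definition punishing (lam : requirement R V) (u : V) (sg : profile Pi V) (t : strategy V) :=
  [/\ forall j, j != owner u -> valid_strat owner E j (sg j),
      valid_strat owner E (owner u) t,
      forall h w, is_hist E u (rcons h w) -> compat_minus owner (owner u) sg u (rcons h w) ->
        lam_consistent owner mu lam (outcome owner (shift (upd sg (owner u) t) h) w)
    & best_resp_val owner E mu (owner u) u sg = nego owner E mu lam u].

(* With steady negotiation, the infimum defining a finite nego(lambda)(u) is
   attained, which provides a punishment. *)
Lemma punishing_exists (Hsteady : steady_negotiation owner E mu)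
    (lam : requirement R V) u :
  (nego owner E mu lam u < +oo)%E -> exists sg t, punishing lam u sg t.
Proof.
move=> hfin; case: (Hsteady (owner u) u lam) => [empty|[x [sg hsg ex] xmin]].
  by move: hfin; rewrite /nego empty ereal_inf0 ltxx.
case: (hsg) => hv [t [ht hc]]; exists sg, t; split => //.
apply/eqP; rewrite eq_le; apply/andP; split; first by rewrite ex; apply/ereal_infP.
by apply: ereal_inf_lbound; exists sg.
Qed.

End Payoffs.

Section Construction.
Variables (R : realType) (Pi V : finType) (owner : V -> Pi) (E : rel V)
  (mu : (nat -> V) -> Pi -> R) (v0 : V).
Hypothesis Hpi : prefix_independent mu.
Variables (eps : R) (lam : requirement R V).
Hypothesis Heps : (0 <= eps)%R.
Hypothesis nego_le : forall v, (nego owner E mu lam v <= lam v + eps%:E)%E.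
Variable xi : nat -> V.
Hypotheses (xi0 : xi 0 = v0) (xi_play : is_play E xi)
  (xi_cons : lam_consistent owner mu lam xi).
Variable def : V -> V.
Hypothesis Hdef : forall v, E v (def v).
Variable pun : V -> profile Pi V * strategy V.
Hypothesis Hpun :
  forall u, (lam u < +oo)%E -> punishing owner E mu lam u (pun u).1 (pun u).2.

Local Notation nego_lam := (nego owner E mu lam).

Definition tau (u : V) : profile Pi V := upd (pun u).1 (owner u) (pun u).2.

(* The memory of the constructed profile: [None] while xi is followed,
   [Some (u, p)] while the owner of u is punished by tau u, the punishment
   having started at position p of the history (where u was visited). *)
Definition mode := option (V * nat).

Definition prescribed (m : mode) (s : seq V) : V :=
  match m with
  | None => xi (size s)
  | Some (u, p) => tau u (owner (last v0 s)) (drop p s)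
  end.

Definition next_mode (m : mode) (s : seq V) (w : V) : mode :=
  if w == prescribed m s then m else
  let x := last v0 s in
  match m with
  | Some (u, p) => if (owner u == owner x) && ~~ (nego_lam x < nego_lam u)%E then m
                   else Some (x, (size s).-1)
  | None => Some (x, (size s).-1)
  end.

(* The memory after a history, obtained by running next_mode along it
   (mode_rev reads the reversed history). *)
Fixpoint mode_rev (r : seq V) : mode :=
  match r with
  | w :: ((_ :: _) as r') => next_mode (mode_rev r') (rev r') w
  | _ => None
  end.

Definition mode_of (s : seq V) : mode := mode_rev (rev s).

Lemma mode_of_rcons s w : s <> [::] -> mode_of (rcons s w) = next_mode (mode_of s) s w.
Proof.
move=> hs; rewrite /mode_of rev_rcons /=.
case er: (rev s) => [|a r]; first by move: er => /(congr1 rev); rewrite revK.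
by rewrite -er revK.
Qed.

(* The constructed profile: play the prescribed vertex (falling back on an
   arbitrary edge in histories that cannot occur). *)
Definition spe : profile Pi V := fun _ s =>
  let w := prescribed (mode_of s) s in if E (last v0 s) w then w else def (last v0 s).

(* The invariant of histories from v0: in mode None the history is a prefix
   of xi; in mode Some (u, p) the punishment is well defined and the part of
   the history since position p is compatible with the punishers' profile. *)
Definition coherent (s : seq V) : Prop :=
  is_hist E v0 s /\
  match mode_of s with
  | None => s = pre xi (size s).-1
  | Some (u, p) => [/\ (lam u < +oo)%E, is_hist E u (drop p s)
                     & compat_minus owner (owner u) (pun u).1 u (drop p s)]
  end.

Lemma tau_valid u : (lam u < +oo)%E -> valid_profile owner E (tau u).
Proof.
move=> /Hpun [hothers hself _ _] j; rewrite /tau /upd.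
by case: eqP => [->//|/eqP]; apply: hothers.
Qed.

Lemma prescribed_edge s : coherent s -> E (last v0 s) (prescribed (mode_of s) s).
Proof.
case=> _; case: (mode_of s) => [[u p] [hl hu _]|es] /=.
  have hd := hist_nonnil hu; rewrite -(last_drop _ hd).
  by apply: valid_strat_last => //; apply: tau_valid.
by rewrite es pre_last pre_size; apply: xi_play.
Qed.

Lemma spe_prescribed j s : coherent s -> spe j s = prescribed (mode_of s) s.
Proof. by move=> /prescribed_edge he; rewrite /spe he. Qed.

Lemma spe_valid : valid_profile owner E spe.
Proof. by move=> j s y _; rewrite /spe last_rcons; case: ifP. Qed.

Lemma coherent_follow s : coherent s ->
  coherent (rcons s (prescribed (mode_of s) s)) /\
  mode_of (rcons s (prescribed (mode_of s) s)) = mode_of s.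
Proof.
move=> hs; have he := prescribed_edge hs; case: (hs) => hh hm.
have hne := hist_nonnil hh.
have same : mode_of (rcons s (prescribed (mode_of s) s)) = mode_of s.
  by rewrite mode_of_rcons // /next_mode eqxx.
split=> //; split; first exact: (hist_rcons hh he).
rewrite same; move: hm he; case: (mode_of s) => [[u p] [hl hu hc]|es] he /=; last first.
  by rewrite size_rcons /=; move: es; set k := (size s).-1 => ->; rewrite pre_size preS.
have hd := hist_nonnil hu; have hp := drop_nonnil hd.
rewrite drop_rcons ?(ltnW hp) //; split => //.
  by apply: (hist_rcons (x := v0) hu); rewrite last_drop.
apply: (compat_rcons hc hd) => ho.
rewrite (last_nonnil u v0 hd) last_drop // in ho *.
by rewrite /tau /upd (negbTE ho).
Qed.

Lemma cat_pre0 h (rho : nat -> V) : h ++ pre rho 0 = rcons h (rho 0).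
Proof. by rewrite /pre /mkseq /= cats1. Qed.

Lemma spe_follows h v (rho : nat -> V) : coherent (rcons h v) ->
  outcome owner (shift spe h) v = rho -> forall n,
  [/\ mode_of (h ++ pre rho n) = mode_of (rcons h v), coherent (h ++ pre rho n)
    & rho n.+1 = prescribed (mode_of (rcons h v)) (h ++ pre rho n)].
Proof.
move=> hv erho n; have rho0 : rho 0 = v by rewrite -erho.
have step k : coherent (h ++ pre rho k) ->
    rho k.+1 = prescribed (mode_of (h ++ pre rho k)) (h ++ pre rho k).
  by move=> hk; rewrite -erho outcome_step erho /shift (spe_prescribed _ hk).
have inv k : mode_of (h ++ pre rho k) = mode_of (rcons h v) /\ coherent (h ++ pre rho k).
  elim: k => [|k [IH1 IH2]]; first by rewrite cat_pre0 rho0.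
  rewrite preS -rcons_cat (step k IH2); have [I1 I2] := coherent_follow IH2.
  by split; [rewrite I2 | exact: I1].
by have [e1 e2] := inv n; split => //; rewrite step // e1.
Qed.

(* Every outcome of the constructed profile from a coherent history is
   lambda-consistent: it is either a suffix of xi or a punishment outcome. *)
Lemma spe_consistent h v : coherent (rcons h v) ->
  lam_consistent owner mu lam (outcome owner (shift spe h) v).
Proof.
move=> hv; set rho := outcome owner (shift spe h) v.
have F := spe_follows hv (erefl rho); case: (hv) => _.
case em: (mode_of (rcons h v)) => [[u p]|]; last first.
  rewrite size_rcons /= => eh.
  have erho n : rho n = xi (size h + n).
    elim: n => [|n IH]; first by rewrite addn0 /rho -(pre_last v xi) -eh last_rcons.
    have [_ _ ->] := F n; rewrite em /= size_cat pre_size.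
    by rewrite addnS.
  move=> n; have -> : Defs.suffix rho n = Defs.suffix xi (size h + n).
    by apply: funext => k; rewrite /Defs.suffix erho addnA.
  by rewrite erho; apply: xi_cons.
case=> hl hu hc; have := drop_nonnil (hist_nonnil hu); rewrite size_rcons ltnS => hp.
have erho : rho = outcome owner (shift (tau u) (drop p h)) v.
  symmetry; apply: outcome_char => // k.
  have [_ _ ->] := F k; rewrite em /= last_cat_pre drop_cat; case: ifP => // hph.
  have -> : p = size h by apply/eqP; rewrite eqn_leq hp leqNgt hph.
  by rewrite subnn drop0 drop_size.
have [_ _ hcons _] := Hpun hl.
by rewrite erho; apply: hcons; rewrite -drop_rcons.
Qed.

(* A deviation that starts a new punishment from x = last s keeps coherence:
   the new suffix is the one-edge history x w. *)
Lemma coherent_reset s w : coherent s -> E (last v0 s) w ->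
  (lam (last v0 s) < +oo)%E ->
  mode_of (rcons s w) = Some (last v0 s, (size s).-1) -> coherent (rcons s w).
Proof.
move=> [hh _] he hl em; split; first exact: (hist_rcons hh he).
rewrite em; have -> : drop (size s).-1 (rcons s w) = [:: last v0 s; w].
  have := hist_nonnil hh; case/lastP: s {hh he hl em} => [//|s x] _.
  by rewrite last_rcons size_rcons /= -!cats1 -catA drop_size_cat.
split => //; first by exists [:: w]; rewrite /= he.
by case=> [|n] //= _; rewrite eqxx.
Qed.

Lemma coherent_keep s w u p : coherent s -> E (last v0 s) w -> mode_of s = Some (u, p) ->
  owner (last v0 s) = owner u -> mode_of (rcons s w) = Some (u, p) -> coherent (rcons s w).
Proof.
move=> [hh hm] he em ho em'; split; first exact: (hist_rcons hh he).
rewrite em'; move: hm; rewrite em => -[hl hu hc].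
have hd := hist_nonnil hu; have hp := drop_nonnil hd.
rewrite drop_rcons ?(ltnW hp) //; split => //.
  by apply: (hist_rcons (x := v0) hu); rewrite last_drop.
apply: (compat_rcons hc hd) => ho'.
by rewrite (last_nonnil u v0 hd) last_drop // ho eqxx in ho'.
Qed.

Lemma coherent_step s w : coherent s -> E (last v0 s) w -> coherent (rcons s w).
Proof.
move=> hs he; have hne := hist_nonnil hs.1.
have hl : (lam (last v0 s) < +oo)%E.
  case/lastP: s hs he hne => [//|h v] hs _ _.
  have := spe_consistent hs 0; rewrite last_rcons => hle.
  exact: le_lt_trans hle (ltey _).
have := mode_of_rcons w hne; rewrite /next_mode.
case: (eqVneq w (prescribed (mode_of s) s)) => [-> _|_]; first by have [] := coherent_follow hs.
case em: (mode_of s) => [[u p]|] em'; last exact: coherent_reset.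
case: ifP em' => [/andP [/eqP ho _]|_] em'; last exact: coherent_reset.
exact: (coherent_keep hs he em (esym ho) em').
Qed.

Lemma coherent_all s : is_hist E v0 s -> coherent s.
Proof.
case=> t [-> ht]; elim/last_ind: t ht => [|t w IH].
  by split; [exists [::] | rewrite /= /pre /mkseq /= xi0].
rewrite rcons_path => /andP [ht he]; rewrite -rcons_cons.
exact: coherent_step (IH ht) he.
Qed.

Lemma spe_outcome : outcome owner spe v0 = xi.
Proof.
have hv0 : coherent (rcons [::] v0) by apply: coherent_all; exists [::].
have F := spe_follows (rho := outcome owner spe v0) hv0 erefl.
apply: funext => -[|n]; first by rewrite xi0.
by have [_ _ ->] := F n; rewrite /= size_map size_iota.
Qed.

Definition mode_measure (m : mode) : nat :=
  if m is Some (u, _) then #|[set y | (nego_lam y < nego_lam u)%E]| else 0.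

Section Deviation.
Variables (h : seq V) (v : V) (i : Pi) (s' : strategy V).
Hypotheses (hv : is_hist E v0 (rcons h v)) (hs' : valid_strat owner E i s').

Let rD := outcome owner (upd (shift spe h) i (fun h' => s' (h ++ h'))) v.
Let rN := outcome owner (shift spe h) v.
Let hD (n : nat) : seq V := h ++ pre rD n.

Let hD0 : hD 0 = rcons h v.
Proof. exact: cat_pre0. Qed.

Let hDS n : hD n.+1 = rcons (hD n) (rD n.+1).
Proof. by rewrite /hD preS rcons_cat. Qed.

Let last_hD n : last v0 (hD n) = rD n.
Proof. exact: last_cat_pre. Qed.

Let rD_step n :
  rD n.+1 = if owner (rD n) == i then s' (hD n) else spe (owner (rD n)) (hD n).
Proof. by rewrite /rD outcome_step /upd /shift; case: (_ == i). Qed.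

Lemma coherent_hD n : coherent (hD n).
Proof.
elim: n => [|n IH]; first by rewrite hD0; apply: coherent_all.
rewrite hDS; apply: (coherent_step IH); rewrite last_hD rD_step; case: eqP => ho.
  by have := valid_strat_last (x := v0) (hist_nonnil IH.1) hs'; rewrite last_hD; apply.
by rewrite /spe last_hD; case: ifP.
Qed.

Let hD_nonnil n : hD n <> [::].
Proof. exact: (hist_nonnil (coherent_hD n).1). Qed.

Let deviates n := rD n.+1 != prescribed (mode_of (hD n)) (hD n).

Lemma deviator n : deviates n -> owner (rD n) = i.
Proof.
move=> dn; apply/eqP/negPn/negP => ho; move: dn.
by rewrite /deviates rD_step (negbTE ho) (spe_prescribed _ (coherent_hD n)) eqxx.
Qed.

Lemma agree n : (forall k, k < n -> ~~ deviates k) ->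
  pre rD n = pre rN n /\ mode_of (hD n) = mode_of (rcons h v).
Proof.
have F := spe_follows (coherent_all hv) (erefl rN).
elim: n => [|n IH] hk; first by rewrite hD0.
have [e1 e2] := IH (fun k hkn => hk k (ltn_trans hkn (ltnSn n))).
have := hk n (ltnSn n); rewrite /deviates negbK => /eqP nd.
have [_ _ eN] := F n.
have eS : rD n.+1 = rN n.+1 by rewrite nd e2 /hD e1 eN.
split; first by rewrite !preS e1 eS.
by rewrite hDS (mode_of_rcons _ (@hD_nonnil n)) /next_mode -nd eqxx.
Qed.

Lemma no_deviation : (forall n, ~~ deviates n) -> rD = rN.
Proof.
move=> nodev; apply: funext => n; have [e _] := agree (n := n) (fun k _ => nodev k).
by rewrite -(pre_last v0 rD) e pre_last.
Qed.

Let punished_below (b : \bar R) n :=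
  exists u p, [/\ mode_of (hD n) = Some (u, p), owner u = i & (nego_lam u <= b)%E].

Lemma punish_step n u p : mode_of (hD n) = Some (u, p) -> owner u = i ->
  mode_of (hD n.+1) = Some (u, p) \/
  exists p', [/\ mode_of (hD n.+1) = Some (rD n, p'), owner (rD n) = i
               & (nego_lam (rD n) < nego_lam u)%E].
Proof.
move=> em ou; rewrite hDS (mode_of_rcons _ (@hD_nonnil n)) /next_mode em last_hD.
case: eqP => [_|hne]; first by left.
have ho : owner (rD n) = i by apply: deviator; rewrite /deviates em; apply/eqP.
rewrite ou ho eqxx /=; case: ifP => hlt; first by left.
by right; exists (size (hD n)).-1; split => //; move/negbFE: hlt.
Qed.

Lemma punished_below_step b n : punished_below b n -> punished_below b n.+1.
Proof.
case=> u [p [em ou hu]]; case: (punish_step em ou) => [em'|[p' [em' ho hlt]]].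
  by exists u, p.
by exists (rD n), p'; split => //; apply: le_trans (ltW hlt) hu.
Qed.

Lemma deviation_punished n : deviates n -> punished_below (nego_lam (rD n)) n.+1.
Proof.
move=> dn; have ho := deviator dn; move: dn.
rewrite /punished_below /deviates hDS (mode_of_rcons _ (@hD_nonnil n)) /next_mode.
rewrite last_hD => /negbTE ->.
case: (mode_of (hD n)) => [[u p]|]; last by exists (rD n), (size (hD n)).-1.
case: ifP => [/andP [/eqP ou hn]|_]; last by exists (rD n), (size (hD n)).-1.
by exists u, p; split => //; [rewrite ou | rewrite leNgt].
Qed.

Lemma mode_decreases b n : punished_below b n ->
  mode_of (hD n.+1) != mode_of (hD n) ->
  mode_measure (mode_of (hD n.+1)) < mode_measure (mode_of (hD n)).
Proof.
case=> u [p [em ou _]] hne; case: (punish_step em ou) => [em'|[p' [em' _ hlt]]].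
  by rewrite em' em eqxx in hne.
rewrite em em' /=; apply: proper_card; apply/properP; split.
  by apply/fintype.subsetP => y; rewrite !inE => hy; apply: lt_trans hy hlt.
by exists (rD n); rewrite !inE ?hlt // ltxx.
Qed.

(* Once the punishment of i from u is permanent, the rest of the deviating
   play is compatible with the punishers' profile, so it pays i at most the
   best-response value nego(u). *)
Lemma stable_punishment_bound N u p : owner u = i ->
  (forall j, mode_of (hD (N + j)) = Some (u, p)) -> ((mu rD i)%:E <= nego_lam u)%E.
Proof.
move=> ou stable.
have inv j : [/\ (lam u < +oo)%E, is_hist E u (drop p (hD (N + j)))
    & compat_minus owner (owner u) (pun u).1 u (drop p (hD (N + j)))].
  by have [_] := coherent_hD (N + j); rewrite stable.
have [hl hu0 _] := inv 0.
have hp : p <= size h + N.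
  by have := drop_nonnil (hist_nonnil hu0); rewrite size_cat pre_size addn0 addnS ltnS.
pose psi := Defs.suffix (cat_play h rD) p.
have drop_hD j : drop p (hD (N + j)) = pre psi (size h + (N + j) - p).
  by rewrite /hD -pre_cat_play drop_pre // (leq_trans hp) // leq_add2l leq_addr.
have long k : k < size h + (N + k.+1) - p.
  by rewrite addnA -addnBAC //; apply: leq_trans (ltnSn k) (leq_addl _ _).
have psi_le : ((mu psi i)%:E <= best_resp_val owner E mu i u (pun u).1)%E.
  apply: (play_le_best_resp mu Hdef).
  - by have [_ hu _] := inv 0; rewrite drop_hD in hu; apply: hist_pre_head hu.
  - by move=> k; have [_ hu _] := inv k.+1; rewrite drop_hD in hu;
      apply: hist_pre_edge hu (long k).
  - move=> k ho; have [_ _ hc] := inv k.+1; rewrite drop_hD ou in hc.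
    exact: compat_pre_step hc (long k) ho.
have [_ _ _ <-] := Hpun hl.
by rewrite ou -(Hpi h rD) -(mu_suffix Hpi _ p).
Qed.

Lemma deviation_gain :
  (mu (outcome owner (upd (shift spe h) i (fun h' => s' (h ++ h'))) v) i <=
   mu (outcome owner (shift spe h) v) i + eps)%R.
Proof.
change (mu rD i <= mu rN i + eps)%R.
case: (pselect (exists n, deviates n)) => [exdev|nodev]; last first.
  by rewrite no_deviation ?lerDl // => n; apply/negP => dn; apply: nodev; exists n.
case: (ex_minnP exdev) => n0 dev0 first0.
have [e1 _] : pre rD n0 = pre rN n0 /\ mode_of (hD n0) = mode_of (rcons h v).
  by apply: agree => k hk; apply/negP => /first0; rewrite leqNgt hk.
set x := rD n0.
have ex : x = rN n0 by rewrite /x -(pre_last v0 rD) e1 pre_last.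
have lam_x : (lam x <= (mu rN i)%:E)%E.
  by have := spe_consistent (coherent_all hv) n0; rewrite -/rN (mu_suffix Hpi) -ex deviator.
have below n : n0 < n -> punished_below (nego_lam x) n.
  move=> hn; rewrite -(subnKC hn); elim: (n - n0.+1) => [|k IH].
    by rewrite addn0; apply: deviation_punished.
  by rewrite addnS; apply: punished_below_step.
have [N hN stable] := eventually_constant (f := fun n => mode_of (hD n))
  (m := mode_measure) (n0 := n0.+1) (fun n hn => mode_decreases (below n hn)).
have [u [p [em ou hu]]] := below N hN.
have tail := stable_punishment_bound ou (fun j => etrans (stable j) em).
rewrite -lee_fin EFinD; apply: le_trans tail _; apply: le_trans hu _.
by apply: le_trans (nego_le x) _; rewrite leeD2r.
Qed.

End Deviation.

Lemma spe_is_eps_SPE : eps_SPE owner E mu eps v0 spe.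
Proof. by move=> h v hv i s' hs'; rewrite !Hpi; apply: deviation_gain. Qed.


Lemma nego_spe_exists : exists sg : profile Pi V,
  valid_profile owner E sg /\ eps_SPE owner E mu eps v0 sg /\
  (forall n, outcome owner sg v0 n = xi n).
Proof. by exists spe; split; [|split]; [apply: spe_valid|apply: spe_is_eps_SPE|rewrite spe_outcome]. Qed.

End Construction.

Local Open Scope ring_scope.

Theorem mainTheorem5 (R : realType) (Pi V : finType) (owner : V -> Pi)
  (E : rel V) (mu : (nat -> V) -> Pi -> R) (v0 : V)
  (HE : forall v, exists w, E v w)
  (Hwi : well_initialized E v0)
  (Hpi : prefix_independent mu)
  (Hsteady : steady_negotiation owner E mu)
  (eps : R) (Heps : 0 <= eps)
  (lam : requirement R V)
  (Hfix : eps_fixed_point owner E mu eps lam) :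
  forall xi : nat -> V, xi 0%N = v0 -> is_play E xi -> lam_consistent owner mu lam xi ->
  exists sg : profile Pi V,
    valid_profile owner E sg /\ eps_SPE owner E mu eps v0 sg /\
    (forall n, outcome owner sg v0 n = xi n).
Proof.
move=> xi xi0 xi_play xi_cons.
have nego_le v : (nego owner E mu lam v <= lam v + eps%:E)%E by case: (Hfix v).
have [def Hdef] := choice HE.
have punisher u : exists pr : profile Pi V * strategy V,
    (lam u < +oo)%E -> punishing owner E mu lam u pr.1 pr.2.
  case: (pselect (lam u < +oo)%E) => hl; last by exists ((fun _ _ => v0), (fun _ => v0)).
  have [sg [t hpun]] := punishing_exists Hsteady (le_lt_trans (nego_le u) (lte_add_pinfty hl (ltry _))).
  by exists (sg, t).
have [pun Hpun] := choice punisher.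
exact: (nego_spe_exists Hpi Heps nego_le xi0 xi_play xi_cons Hdef Hpun).
Qed.
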